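(* Let $\zeta=e^{-2\pi i/4}=-i$, and let $\Gamma$ be the group generated by the linear operators $L_1,L_{-1}$ on $\mathbb{C}^2$ (basis $(e_{-1},e_1)$) given by $L_1(e_{-1})=e_{-1}-\zeta e_1$, $L_1(e_1)=-\zeta e_1$, $L_{-1}(e_1)=e_1-e_{-1}$, $L_{-1}(e_{-1})=-\zeta e_{-1}$. Then the natural action of $\Gamma$ on $\mathbb{C}^2$, viewed as a real representation on $\mathbb{R}^4$, is irreducible over $\mathbb{R}$.
   Context: This is the case $d=2$, $\alpha=\frac14$ of the operators $L_p$ ($p\in\{-1,1\}$), which preserve the positive definite hermitian form $Q_{1/4}$. *)

From HB Require Import structures.
From mathcomp Require Import all_boot all_order all_algebra.
From mathcomp Require Import complex.
From mathcomp Require Import reals.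
Set Implicit Arguments. Unset Strict Implicit. Unset Printing Implicit Defensive.
Import Order.TTheory GRing.Theory Num.Theory.
Local Open Scope ring_scope.
Local Open Scope complex_scope.

Section Defs.
Variable R : realType.

Definition zeta : R[i] := - 'i.

Definition e_m1 : 'cV[R[i]]_2 := delta_mx 0 0.
Definition e_1  : 'cV[R[i]]_2 := delta_mx 1 0.

(* matrices acting on column vectors; column j is the image of the j-th basis vector *)
Definition L_1 : 'M[R[i]]_2 := row_mx (e_m1 - zeta *: e_1) (- zeta *: e_1).
Definition L_m1 : 'M[R[i]]_2 := row_mx (- zeta *: e_m1) (e_1 - e_m1).

Inductive in_Gamma : 'M[R[i]]_2 -> Prop :=
  | Gamma_one : in_Gamma 1%:M
  | Gamma_L1 : in_Gamma L_1
  | Gamma_Lm1 : in_Gamma L_m1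
  | Gamma_inv g : in_Gamma g -> in_Gamma (invmx g)
  | Gamma_mul g h : in_Gamma g -> in_Gamma h -> in_Gamma (g *m h).

Definition real_subspace (S : 'cV[R[i]]_2 -> Prop) : Prop :=
  [/\ S 0,
      (forall u v, S u -> S v -> S (u + v)) &
      (forall (r : R) v, S v -> S (r%:C *: v))].

Definition Gamma_invariant (S : 'cV[R[i]]_2 -> Prop) : Prop :=
  forall g v, in_Gamma g -> S v -> S (g *m v).

Definition real_irreducible : Prop :=
  forall S, real_subspace S -> Gamma_invariant S ->
    (forall v, S v -> v = 0) \/ (forall v, S v).
End Defs.

From Pilot Require Import Defs.
From mathcomp Require Import all_boot all_order all_algebra complex reals ring.
From mathcomp Require Import boolp.
(* In coordinates, [L_m1 (a, b) = (i a - b, b)] and [L_1 (a, b) = (a, i (a + b))].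
   Applying [L_m1 - 1], if necessary after [L_1 - 1], to a nonzero vector of a
   Gamma-invariant real subspace S yields a nonzero vector [c e_m1] of S. As
   [L_m1] acts on the line [C e_m1] as multiplication by i, the real span of
   [c e_m1] and [L_m1 (c e_m1)] is all of [C e_m1]. Finally [L_1 - 1] maps
   [z e_m1] to [i z e_1], so S also contains [C e_1], hence S = C^2. *)

Set Implicit Arguments. Unset Strict Implicit. Unset Printing Implicit Defensive.
Import GRing.Theory Num.Theory.
Local Open Scope ring_scope.
Local Open Scope complex_scope.

Section Generators.
Variable R : realType.

Local Notation e_m1 := (e_m1 R).
Local Notation e_1 := (e_1 R).

Definition vec2 (a b : R[i]) : 'cV[R[i]]_2 := a *: e_m1 + b *: e_1.

Lemma vec2E (v : 'cV[R[i]]_2) : v = vec2 (v 0 0) (v 1 0).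
Proof.
apply/matrixP => k l; rewrite !mxE (ord1 l) /=.
by case: k => [[|[|//]] ?]; rewrite /= ?mulr1 ?mulr0 ?addr0 ?add0r; congr (v _ _); apply: val_inj.
Qed.

Lemma vec2B a b c d : vec2 a b - vec2 c d = vec2 (a - c) (b - d).
Proof. by rewrite /vec2 opprD addrACA -!scalerBl. Qed.

Lemma vec2_e_m1 a : vec2 a 0 = a *: e_m1.
Proof. by rewrite /vec2 scale0r addr0. Qed.

Lemma mul_row_mx_e_m1 (u w : 'cV[R[i]]_2) : row_mx u w *m e_m1 = u.
Proof.
rewrite /Defs.e_m1 -colE (_ : 0 = lshift 1 (0 : 'I_1)); last exact: val_inj.
by rewrite colKl col_id.
Qed.

Lemma mul_row_mx_e_1 (u w : 'cV[R[i]]_2) : row_mx u w *m e_1 = w.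
Proof.
rewrite /Defs.e_1 -colE (_ : 1 = rshift 1 (0 : 'I_1)); last exact: val_inj.
by rewrite colKr col_id.
Qed.

Lemma mul_L1_e_m1 : L_1 R *m e_m1 = e_m1 + 'i *: e_1.
Proof. by rewrite mul_row_mx_e_m1 /zeta scaleNr opprK. Qed.

Lemma mul_L1_e_1 : L_1 R *m e_1 = 'i *: e_1.
Proof. by rewrite mul_row_mx_e_1 /zeta opprK. Qed.

Lemma mul_Lm1_e_m1 : L_m1 R *m e_m1 = 'i *: e_m1.
Proof. by rewrite mul_row_mx_e_m1 /zeta opprK. Qed.

Lemma mul_Lm1_e_1 : L_m1 R *m e_1 = e_1 - e_m1.
Proof. exact: mul_row_mx_e_1. Qed.

Lemma mul_L1_vec2 a b : L_1 R *m vec2 a b = vec2 a ('i * (a + b)).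
Proof.
rewrite mulmxDr -!scalemxAr mul_L1_e_m1 mul_L1_e_1 /vec2 scalerDr !scalerA -addrA -scalerDl.
by congr (_ + _ *: _); ring.
Qed.

Lemma mul_Lm1_vec2 a b : L_m1 R *m vec2 a b = vec2 ('i * a - b) b.
Proof.
rewrite mulmxDr -!scalemxAr mul_Lm1_e_m1 mul_Lm1_e_1 /vec2 scalerBr scalerA addrCA.
by rewrite addrC -scalerBl mulrC.
Qed.

End Generators.

Section InvariantSubspace.
Variables (R : realType) (S : 'cV[R[i]]_2 -> Prop).
Hypotheses (subS : real_subspace S) (invS : Gamma_invariant S).

Local Notation e_m1 := (e_m1 R).
Local Notation e_1 := (e_1 R).

Lemma subspaceD u v : S u -> S v -> S (u + v).
Proof. by have [_ + _] := subS; apply. Qed.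

Lemma subspaceZ (r : R) v : S v -> S (r%:C *: v).
Proof. by have [_ _] := subS; apply. Qed.

Lemma subspaceB u v : S u -> S v -> S (u - v).
Proof.
move=> Su Sv; apply: subspaceD => //.
by rewrite -scaleN1r -(rmorphN1 (real_complex R)); apply: subspaceZ.
Qed.

Lemma subspace_mulmx_sub g v : in_Gamma g -> S v -> S (g *m v - v).
Proof. by move=> Gg Sv; apply: subspaceB => //; apply: invS. Qed.

Lemma subspace_complex_line v : S v -> S ('i *: v) -> forall z, S (z *: v).
Proof.
move=> Sv Siv z; rewrite (complexE z) scalerDl mulrC -scalerA.
by apply: subspaceD; apply: subspaceZ.
Qed.

Lemma subspace_e_m1_line c : c != 0 -> S (c *: e_m1) -> forall z, S (z *: e_m1).
Proof.
move=> c0 Sc z; rewrite -(divfK c0 z) -scalerA.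
apply: subspace_complex_line => //.
by rewrite scalerA mulrC -scalerA -mul_Lm1_e_m1 scalemxAr; apply: invS => //; constructor.
Qed.

Lemma subspace_e_1_line : (forall z, S (z *: e_m1)) -> forall z, S (z *: e_1).
Proof.
move=> Se z; have := subspace_mulmx_sub (Gamma_L1 R) (Se (- 'i * z)).
rewrite -scalemxAr mul_L1_e_m1 scalerDr addrAC subrr add0r scalerA.
by rewrite mulrAC mulNr -expr2 sqr_i opprK mul1r.
Qed.

Lemma subspace_full c : c != 0 -> S (c *: e_m1) -> forall v, S v.
Proof.
move=> c0 Sc v; have Sm1 := subspace_e_m1_line c0 Sc.
by rewrite (vec2E v); apply: subspaceD; [apply: Sm1 | apply: subspace_e_1_line].
Qed.

Lemma subspace_e_m1_nonzero v : S v -> v != 0 -> exists2 c, c != 0 & S (c *: e_m1).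
Proof.
move=> Sv v0; set a := v 0 0; set b := v 1 0.
have Sab : S (vec2 a b) by rewrite /a /b -vec2E.
have := subspace_mulmx_sub (Gamma_Lm1 R) Sab.
rewrite mul_Lm1_vec2 vec2B subrr vec2_e_m1.
have [d0 _ | ] := eqVneq ('i * a - b - a) 0; last by exists ('i * a - b - a).
have eb : b = 'i * a - a by rewrite -[LHS]addr0 -d0; ring.
have a0 : a != 0.
  by apply: contraNneq v0 => a0; rewrite (vec2E v) -/a -/b eb a0 mulr0 subr0 vec2_e_m1 scale0r.
exists ('i * a); first by rewrite mulf_neq0 ?neq0Ci.
have := subspace_mulmx_sub (Gamma_L1 R) Sab.
rewrite mul_L1_vec2 vec2B subrr => Su.
have := subspace_mulmx_sub (Gamma_Lm1 R) Su.
rewrite mul_Lm1_vec2 vec2B mulr0 sub0r subr0 subrr vec2_e_m1.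
(* with [b = (i - 1) a] the coefficient is [-(i a + (i - 1)^2 a) = i a] *)
rewrite (_ : - _ = 'i * a - (1 + 'i * 'i) * a); last by rewrite eb; ring.
by rewrite -expr2 sqr_i subrr mul0r subr0.
Qed.

End InvariantSubspace.

Theorem mainTheorem15 (R : realType) : real_irreducible R.
Proof.
move=> S subS invS.
have [[v Sv v0] | S0] := pselect (exists2 v, S v & v != 0).
  right; have [c c0 Sc] := subspace_e_m1_nonzero subS invS Sv v0.
  exact: subspace_full Sc.
by left => v Sv; apply: contra_notP S0 => /eqP v0; exists v.
Qed.
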